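(* Let $\mathcal G$ be a doubly connected molecular graph. Construct $\mathcal G_{new}$ from $\mathcal G$ as follows: add a new molecule $\mathcal M_{new}$; replace a diffusive edge $b_0$ of $\mathcal G$ joining molecules $\mathcal M_1$ and $\mathcal M_2$ by two diffusive edges, $b_1$ joining $\mathcal M_1$ and $\mathcal M_{new}$ and $b_2$ joining $\mathcal M_2$ and $\mathcal M_{new}$; and add a diffusive edge $b_3$ joining $\mathcal M_{new}$ and a molecule $\mathcal M_3$ of $\mathcal G$. If a blue solid edge is redundant in $\mathcal G$, then it is also redundant in $\mathcal G_{new}$.
   Context: A molecular graph is a finite multigraph whose vertices are called molecules and each of whose edges joins two distinct molecules and is either a diffusive edge or a blue solid edge (parallel edges are allowed). A molecular graph is doubly connected if there exist two disjoint sets of edges, $\mathcal B_{black}$ consisting only of diffusive edges and $\mathcal B_{blue}$ consisting only of blue solid or diffusive edges, such that each of $\mathcal B_{black}$ and $\mathcal B_{blue}$ contains a spanning tree of the set of all molecules. A blue solid edge $e$ of a doubly connected graph is redundant if the graph obtained by deleting $e$ is still doubly connected. *)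

From mathcomp Require Import all_boot.
Set Implicit Arguments. Unset Strict Implicit. Unset Printing Implicit Defensive.

(* A molecular graph: finite multigraph with molecules mV and edges mE.
   Each edge e joins msrc e and mdst e; mdiff e = true iff e is a diffusive
   edge, false iff it is a blue solid edge. *)
Record mgraph := MGraph {
  mV : finType;
  mE : finType;
  msrc : mE -> mV;
  mdst : mE -> mV;
  mdiff : mE -> bool }.

Definition mwf (G : mgraph) : Prop := forall e : mE G, msrc e != mdst e.

Definition adj (G : mgraph) (S : {set mE G}) : rel (mV G) :=
  fun x y => [exists e in S, ((msrc e == x) && (mdst e == y))
                          || ((msrc e == y) && (mdst e == x))].

Definition connects (G : mgraph) (S : {set mE G}) : Prop :=
  forall x y : mV G, connect (adj S) x y.

Definition spanning_tree (G : mgraph) (T : {set mE G}) : Prop :=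
  connects T /\ forall e, e \in T -> ~ connects (T :\ e).

Definition contains_spanning_tree (G : mgraph) (B : {set mE G}) : Prop :=
  exists T : {set mE G}, T \subset B /\ spanning_tree T.

Definition doubly_connected (G : mgraph) : Prop :=
  exists Bblack Bblue : {set mE G},
    [disjoint Bblack & Bblue] /\
    (forall e, e \in Bblack -> mdiff e) /\
    (* Bblue consists of blue solid or diffusive edges: no restriction *)
    contains_spanning_tree Bblack /\ contains_spanning_tree Bblue.

Definition delete_edge (G : mgraph) (e0 : mE G) : mgraph :=
  @MGraph (mV G) {e : mE G | e != e0}
    (fun e => msrc (val e)) (fun e => mdst (val e)) (fun e => mdiff (val e)).

Definition redundant (G : mgraph) (e : mE G) : Prop :=
  doubly_connected G /\ mdiff e = false /\ doubly_connected (delete_edge e).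

(* G_new: new molecule None; edge b0 (joining M1 = msrc b0, M2 = mdst b0)
   replaced by b1 = inr 0 (M1 -- new), b2 = inr 1 (M2 -- new), and
   b3 = inr 2 (new -- M3), all diffusive. *)
Definition new_src (G : mgraph) (b0 : mE G) (M3 : mV G)
  (e : ({e : mE G | e != b0} + 'I_3)%type) : option (mV G) :=
  match e with
  | inl x => Some (msrc (val x))
  | inr i => if val i == 0 then Some (msrc b0)
             else if val i == 1 then Some (mdst b0) else None
  end.

Definition new_dst (G : mgraph) (b0 : mE G) (M3 : mV G)
  (e : ({e : mE G | e != b0} + 'I_3)%type) : option (mV G) :=
  match e with
  | inl x => Some (mdst (val x))
  | inr i => if val i == 2 then Some M3 else None
  end.

Definition new_diff (G : mgraph) (b0 : mE G)
  (e : ({e : mE G | e != b0} + 'I_3)%type) : bool :=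
  match e with
  | inl x => mdiff (val x)
  | inr _ => true
  end.

Definition Gnew (G : mgraph) (b0 : mE G) (M3 : mV G) : mgraph :=
  @MGraph (option (mV G))
    ({e : mE G | e != b0} + 'I_3)%type
    (new_src M3) (new_dst M3) (@new_diff G b0).

(* A molecular graph is doubly connected iff it has two disjoint edge sets,
   the first one diffusive, each of which connects all molecules (a
   connecting set contains a spanning tree).  Both tree sets of G transfer to
   G_new: the one containing b0 (if any) uses the path b1 b2 in place of b0,
   the other one reaches the new molecule through b3; as b1, b2, b3 are
   diffusive, the first set stays diffusive. *)

From mathcomp Require Import all_boot.

Set Implicit Arguments.
Unset Strict Implicit.
Unset Printing Implicit Defensive.

Section Adjacency.
Variable G : mgraph.
Implicit Types S : {set mE G}.

Lemma adj_sym S : symmetric (adj S).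
Proof.
by move=> x y; apply/existsP/existsP=> -[f /andP[fS fxy]]; exists f;
  rewrite fS orbC.
Qed.

Lemma adj_connect_sym S : connect_sym (adj S).
Proof. exact/sym_connect_sym/adj_sym. Qed.

Lemma adj_edge S f : f \in S -> adj S (msrc f) (mdst f).
Proof. by move=> fS; apply/existsP; exists f; rewrite fS !eqxx. Qed.

End Adjacency.

Lemma connect_adj_homo (G G' : mgraph) (S : {set mE G}) (S' : {set mE G'})
    (h : mV G -> mV G') :
    (forall f, f \in S -> connect (adj S') (h (msrc f)) (h (mdst f))) ->
  forall x y, connect (adj S) x y -> connect (adj S') (h x) (h y).
Proof.
move=> hS x _ /connectP[p xp ->]; elim: p x xp => [|z p IHp] x //=.
move=> /andP[/existsP[f /andP[fS fxz]] /IHp]; apply: connect_trans.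
by case/orP: fxz => /andP[/eqP <- /eqP <-]; [|rewrite adj_connect_sym]; exact: hS.
Qed.

Section Connectivity.
Variable G : mgraph.
Implicit Types S : {set mE G}.

Lemma connectsS S (S' : {set mE G}) : S \subset S' -> connects S -> connects S'.
Proof.
move=> sSS' cS x y; apply: (connect_adj_homo (h := id)) (cS x y) => f fS.
exact/connect1/adj_edge/(subsetP sSS').
Qed.

Lemma contains_spanning_treeP S : contains_spanning_tree S <-> connects S.
Proof.
split=> [[T [sTS [cT _]]] | cS]; first exact: connectsS sTS cT.
have connectsP (T : {set mE G}) :
    reflect (connects T) [forall x, forall y, connect (adj T) x y].
  by apply: (iffP forallP) => cT x; [apply/forallP: (cT x) | apply/forallP].
pose P (T : {set mE G}) :=
  (T \subset S) && [forall x, forall y, connect (adj T) x y].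
have [T /minsetP[/andP[sTS /connectsP cT] minT]] : {T | minset P T}.
  by apply: ex_minset; exists S; rewrite /P subxx; apply/connectsP.
exists T; split=> //; split=> // f fT cTf.
have PTf : P (T :\ f) by rewrite /P (subset_trans (subD1set T f)) //; apply/connectsP.
by have /setP/(_ f) := minT _ PTf (subD1set T f); rewrite !inE eqxx fT.
Qed.

(* Double connectivity using only edges of [A]; the spanning trees are
   replaced by connecting edge sets, see [contains_spanning_treeP]. *)
Definition doubly_connected_in (A : {set mE G}) : Prop :=
  exists Bk Bb : {set mE G},
    [/\ Bk :|: Bb \subset A, [disjoint Bk & Bb], {in Bk, forall f, mdiff f},
        connects Bk & connects Bb].

Lemma doubly_connected_inS (A A' : {set mE G}) :
  A \subset A' -> doubly_connected_in A -> doubly_connected_in A'.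
Proof.
move=> sAA' [Bk [Bb [sA dis dif ck cb]]].
by exists Bk, Bb; split=> //; apply: subset_trans sAA'.
Qed.

Lemma doubly_connectedE : doubly_connected G <-> doubly_connected_in [set: mE G].
Proof.
split=> [[Bk [Bb [dis [dif [/contains_spanning_treeP ck /contains_spanning_treeP cb]]]]]
        | [Bk [Bb [_ dis dif ck cb]]]].
  by exists Bk, Bb; split; rewrite ?subsetT.
by exists Bk, Bb; do !split=> //; apply/contains_spanning_treeP.
Qed.

End Connectivity.

Section DeleteEdge.
Variables (G : mgraph) (e0 : mE G).
Implicit Types S : {set mE (delete_edge e0)}.

Lemma adj_delete_edge S : adj S =2 adj (val @: S).
Proof.
move=> x y; apply/existsP/existsP=>
  [[f /andP[fS fxy]] | [_ /andP[/imsetP[f fS ->] fxy]]].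
  by exists (val f); rewrite imset_f.
by exists f; rewrite fS.
Qed.

Lemma connects_delete_edge S : connects S <-> connects (val @: S).
Proof.
have eqS := eq_connect (adj_delete_edge S).
by split=> cS x y; [rewrite -eqS | rewrite eqS]; apply: cS.
Qed.

Lemma imset_val_preimset (S : {set mE G}) :
  S \subset [set~ e0] -> val @: (val @^-1: S : {set mE (delete_edge e0)}) = S.
Proof.
move=> sS; apply/setP=> f; apply/imsetP/idP=> [[g] | fS]; first by rewrite inE => gS ->.
have nf : f != e0 by have := subsetP sS _ fS; rewrite in_setC1.
by exists (exist _ f nf); rewrite ?inE.
Qed.

Lemma doubly_connected_delete_edge :
  doubly_connected (delete_edge e0) <-> doubly_connected_in [set~ e0].
Proof.
split=> [/doubly_connectedE [Bk [Bb [_ dis dif ck cb]]] | [Bk [Bb [sA dis dif ck cb]]]].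
  exists (val @: Bk), (val @: Bb); split.
  - by apply/subsetP=> _ /setUP[]/imsetP[f _ ->]; rewrite in_setC1 (valP f).
  - by rewrite -setI_eq0 -imsetI ?imset_eq0 ?setI_eq0 // => f g _ _; apply: val_inj.
  - by move=> _ /imsetP[f fk ->]; apply: dif.
  - exact/connects_delete_edge.
  - exact/connects_delete_edge.
have [sk sb] := subUsetP sA.
apply/doubly_connectedE; exists (val @^-1: Bk), (val @^-1: Bb); split.
- exact: subsetT.
- rewrite -setI_eq0 -preimsetI; apply/eqP/setP=> f; rewrite !inE.
  by rewrite -in_setI disjoint_setI0 ?inE.
- by move=> f; rewrite inE => /dif.
- by apply/connects_delete_edge; rewrite imset_val_preimset.
- by apply/connects_delete_edge; rewrite imset_val_preimset.
Qed.

End DeleteEdge.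

Section NewMolecule.
Variables (G : mgraph) (b0 : mE G) (M3 : mV G).
Implicit Types (S : {set mE G}) (c : bool).
Local Notation GN := (Gnew b0 M3).
Local Notation b1 := (inr ord0 : mE GN).
Local Notation b2 := (inr (@Ordinal 3 1 isT) : mE GN).
Local Notation b3 := (inr ord_max : mE GN).

(* [via_b0] selects b1 and b2, which replace b0, and otherwise b3. *)
Definition gnew_lift S (via_b0 : bool) : {set mE GN} :=
  [set x : mE GN | match x with
                   | inl y => val y \in S
                   | inr i => (i < 2) == via_b0
                   end].

Definition gnew_edges (A : {set mE G}) : {set mE GN} :=
  [set x : mE GN | if x is inl y then val y \in A else true].

Lemma connect_gnew_lift_edge S c f : (b0 \in S -> c) -> f \in S ->
  connect (adj (gnew_lift S c)) (Some (msrc f)) (Some (mdst f)).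
Proof.
move=> hc fS; have [fb0 | nfb0] := eqVneq f b0; last first.
  by apply: connect1; refine (@adj_edge GN _ (inl (exist _ f nfb0)) _); rewrite inE.
rewrite fb0 in fS *; rewrite (hc fS).
apply: (@connect_trans (mV GN) _ None); [|rewrite adj_connect_sym]; apply: connect1.
  by refine (@adj_edge GN _ b1 _); rewrite inE.
by refine (@adj_edge GN _ b2 _); rewrite inE.
Qed.

Lemma gnew_lift_adj_new S c : exists w, adj (gnew_lift S c) None (Some w).
Proof.
case: c; [exists (msrc b0); rewrite adj_sym | exists M3].
  by refine (@adj_edge GN _ b1 _); rewrite inE.
by refine (@adj_edge GN _ b3 _); rewrite inE.
Qed.

Lemma connects_gnew_lift S c :
  (b0 \in S -> c) -> connects S -> connects (gnew_lift S c).
Proof.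
move=> hc cS.
have cSome x y : connect (adj (gnew_lift S c)) (Some x) (Some y).
  apply: (@connect_adj_homo _ GN _ _ Some) (cS x y) => f.
  exact: connect_gnew_lift_edge.
have [w /connect1 aw] := gnew_lift_adj_new S c.
case=> [x|] [y|] //; first by rewrite adj_connect_sym; apply: connect_trans aw _.
exact: connect_trans aw _.
Qed.

Lemma doubly_connected_in_gnew (A : {set mE G}) :
  doubly_connected_in A -> doubly_connected_in (gnew_edges A).
Proof.
move=> [Bk [Bb [sA dis dif ck cb]]].
have [c hck hcb] : exists2 c : bool, b0 \in Bk -> c & b0 \in Bb -> ~~ c.
  case: (boolP (b0 \in Bk)) => hk; last by exists false.
  by exists true; rewrite ?(disjointFr dis hk).
exists (gnew_lift Bk c), (gnew_lift Bb (~~ c)); split.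
- apply/subsetP=> -[y|i]; rewrite !inE // => yB.
  by apply: (subsetP sA); rewrite inE.
- rewrite disjoints_subset; apply/subsetP=> -[y|i]; rewrite !inE.
    by move=> /(disjointFr dis) ->.
  by move=> /eqP ->; case: (c).
- by move=> [y|i]; rewrite inE // => /dif.
- exact: connects_gnew_lift.
- exact: connects_gnew_lift.
Qed.

End NewMolecule.

Theorem claimA7 (G : mgraph) (b0 : mE G) (M3 : mV G) (e : mE G)
  (hwf : mwf G) (hdc : doubly_connected G) (hb0 : mdiff b0 = true)
  (hne : e != b0) :
  redundant e -> redundant (inl (exist _ e hne) : mE (Gnew b0 M3)).
Proof.
move=> [_ [he /doubly_connected_delete_edge hdel]]; split; last split=> //.
  apply/doubly_connectedE; apply: doubly_connected_inS (subsetT _) _.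
  exact/(doubly_connected_in_gnew b0 M3)/doubly_connectedE.
apply/doubly_connected_delete_edge.
apply: doubly_connected_inS (doubly_connected_in_gnew b0 M3 hdel).
by apply/subsetP=> -[y|i]; rewrite !inE // => /eqP; apply: contraNneq => ->.
Qed.
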